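(* With $\alpha_f(\sigma):=\sup_{\omega\in\mathbb{R}} f(\sigma+j\omega)$ for $\sigma>\alpha_0$, one has $\lim_{\sigma\to\alpha_0^+}\alpha_f(\sigma)=+\infty$ and $\lim_{\sigma\to+\infty}\alpha_f(\sigma)=0$.
   Context: Fix integers $n\ge 1$, $m\ge 0$, matrices $A_0,\dots,A_m\in\mathbb{C}^{n\times n}$, delays $\tau_0=0$ and $\tau_1,\dots,\tau_m\ge 0$, and weights $w_0,\dots,w_m>0$. Define the matrix function $F(\lambda)=\lambda I_n-\sum_{i=0}^m A_i e^{-\lambda\tau_i}$ for $\lambda\in\mathbb{C}$. The characteristic roots are the solutions of $\det F(\lambda)=0$; this set is nonempty, and every right half-plane $\{\Re\lambda\ge c\}$ contains only finitely many of them, so the spectral abscissa $\alpha_0=\sup\{\Re\lambda:\det F(\lambda)=0\}$ is a finite real number attained by some root. Define $w(\lambda)=\sum_{i=0}^m |e^{-\lambda\tau_i}|/w_i$ and, for $\lambda$ not a characteristic root, $f(\lambda)=w(\lambda)\,\sigma_{\max}(F(\lambda)^{-1})$, where $\sigma_{\max}$ denotes the largest singular value. *)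

From HB Require Import structures.
From Stdlib Require Import Reals Lra ClassicalEpsilon FunctionalExtensionality.
From mathcomp Require Import all_boot all_order all_algebra.

Set Implicit Arguments.
Unset Strict Implicit.
Unset Printing Implicit Defensive.

(* MathComp matrices over a hand-built complex field whose real and
   imaginary parts are Stdlib reals (needed for exp, sqrt, sup). *)

Local Open Scope R_scope.
Record cpx := Cpx { Re : R; Im : R }.

Lemma cpx_ext (a b : cpx) : Re a = Re b -> Im a = Im b -> a = b.
Proof. by case: a => ? ?; case: b => ? ? /= -> ->. Qed.

Definition cpx_eqb (a b : cpx) : bool :=
  if Req_EM_T (Re a) (Re b) then
    (if Req_EM_T (Im a) (Im b) then true else false) else false.

Lemma cpx_eqP : Equality.axiom cpx_eqb.
Proof.
move=> a b; rewrite /cpx_eqb.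
case: (Req_EM_T _ _) => h1; last by constructor => e; apply: h1; rewrite e.
case: (Req_EM_T _ _) => h2; last by constructor => e; apply: h2; rewrite e.
by constructor; apply: cpx_ext.
Qed.

HB.instance Definition _ := hasDecEq.Build cpx cpx_eqP.

Definition cfind (T : Type) (P : pred T) (n : nat) : option T :=
  match excluded_middle_informative (exists x, P x) with
  | left h => Some (proj1_sig (constructive_indefinite_description _ h))
  | right _ => None
  end.

Lemma cfind_correct (T : Type) (P : pred T) n x : cfind P n = Some x -> P x.
Proof.
rewrite /cfind; case: excluded_middle_informative => // h [<-].
exact: proj2_sig (constructive_indefinite_description _ h).
Qed.

Lemma cfind_complete (T : Type) (P : pred T) :
  (exists x, P x) -> exists n, cfind P n.
Proof. by move=> h; exists 0%N; rewrite /cfind; case: excluded_middle_informative. Qed.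

Lemma cfind_ext (T : Type) (P Q : pred T) : P =1 Q -> cfind P =1 cfind Q.
Proof. by move=> h; have -> : P = Q by apply: functional_extensionality. Qed.

HB.instance Definition _ := hasChoice.Build cpx
  (@cfind_correct cpx) (@cfind_complete cpx) (@cfind_ext cpx).

Definition czero : cpx := Cpx 0 0.
Definition cone : cpx := Cpx 1 0.
Definition cadd (a b : cpx) : cpx := Cpx (Re a + Re b) (Im a + Im b).
Definition copp (a : cpx) : cpx := Cpx (- Re a) (- Im a).
Definition cmul (a b : cpx) : cpx :=
  Cpx (Re a * Re b - Im a * Im b) (Re a * Im b + Im a * Re b).
Definition cinv (a : cpx) : cpx :=
  let d := Re a * Re a + Im a * Im a in Cpx (Rdiv (Re a) d) (Rdiv (- Im a) d).

Lemma caddA : associative cadd.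
Proof. by move=> a b c; apply: cpx_ext => /=; ring. Qed.
Lemma caddC : commutative cadd.
Proof. by move=> a b; apply: cpx_ext => /=; ring. Qed.
Lemma cadd0 : left_id czero cadd.
Proof. by move=> a; apply: cpx_ext => /=; ring. Qed.
Lemma caddN : left_inverse czero copp cadd.
Proof. by move=> a; apply: cpx_ext => /=; ring. Qed.

HB.instance Definition _ := GRing.isZmodule.Build cpx caddA caddC cadd0 caddN.

Lemma cmulA : associative cmul.
Proof. by move=> a b c; apply: cpx_ext => /=; ring. Qed.
Lemma cmulC : commutative cmul.
Proof. by move=> a b; apply: cpx_ext => /=; ring. Qed.
Lemma cmul1 : left_id cone cmul.
Proof. by move=> a; apply: cpx_ext => /=; ring. Qed.
Lemma cmulDl : left_distributive cmul cadd.
Proof. by move=> a b c; apply: cpx_ext => /=; ring. Qed.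
Lemma cone_neq0 : cone != czero.
Proof. by apply/eqP => -[]; lra. Qed.

HB.instance Definition _ :=
  GRing.Zmodule_isComNzRing.Build cpx cmulA cmulC cmul1 cmulDl cone_neq0.

Lemma cmulV (x : cpx) : x != 0%R -> cmul (cinv x) x = 1%R.
Proof.
move=> /eqP nz; case: x nz => a b nz.
have hd : a * a + b * b <> 0.
  move=> h; apply: nz; apply: cpx_ext => /=; nra.
by apply: cpx_ext => /=; field.
Qed.
Lemma cinv0 : cinv 0%R = 0%R.
Proof. by apply: cpx_ext => /=; rewrite /Rdiv; ring. Qed.

HB.instance Definition _ := GRing.ComNzRing_isField.Build cpx cmulV cinv0.

Definition RtoC (x : R) : cpx := Cpx x 0.
Definition jC : cpx := Cpx 0 1.
Definition Cexp (z : cpx) : cpx := Cpx (exp (Re z) * cos (Im z)) (exp (Re z) * sin (Im z)).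
Definition Cmod (z : cpx) : R := sqrt (Re z * Re z + Im z * Im z).

Local Close Scope R_scope.
Local Open Scope ring_scope.

Definition vnorm (n : nat) (x : 'cV[cpx]_n) : R :=
  sqrt (\big[Rplus/R0]_(i < n) Rmult (Cmod (x i ord0)) (Cmod (x i ord0))).

(* largest singular value = induced Euclidean (spectral) norm:
   sup { |M x| : |x| = 1 } *)
Definition sigma_max (n : nat) (M : 'M[cpx]_n) : R :=
  epsilon (inhabits R0)
    (is_lub (fun y => exists x : 'cV[cpx]_n, vnorm x = R1 /\ y = vnorm (M *m x))).

Definition Fmat (n m : nat) (A : 'I_m.+1 -> 'M[cpx]_n) (tau : 'I_m.+1 -> R)
  (lam : cpx) : 'M[cpx]_n :=
  lam%:M - \sum_(i < m.+1) Cexp (- (lam * RtoC (tau i))) *: A i.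

Definition char_root (n m : nat) (A : 'I_m.+1 -> 'M[cpx]_n) (tau : 'I_m.+1 -> R)
  (lam : cpx) : Prop := \det (Fmat A tau lam) = 0.

Definition wfun (m : nat) (tau : 'I_m.+1 -> R) (w : 'I_m.+1 -> R) (lam : cpx) : R :=
  \big[Rplus/R0]_(i < m.+1) Rdiv (Cmod (Cexp (- (lam * RtoC (tau i))))) (w i).

Definition ffun (n m : nat) (A : 'I_m.+1 -> 'M[cpx]_n) (tau w : 'I_m.+1 -> R)
  (lam : cpx) : R :=
  Rmult (wfun tau w lam) (sigma_max (invmx (Fmat A tau lam))).

Definition sjw (s om : R) : cpx := Cpx s om.

(* the set { f(sigma + j omega) : omega in R }, whose sup is alpha_f(sigma) *)
Definition fvals (n m : nat) (A : 'I_m.+1 -> 'M[cpx]_n) (tau w : 'I_m.+1 -> R)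
  (s : R) : R -> Prop :=
  fun y => exists om : R, y = ffun A tau w (sjw s om).

(* the set { Re lambda : det F(lambda) = 0 }, whose sup is alpha_0 *)
Definition root_re (n m : nat) (A : 'I_m.+1 -> 'M[cpx]_n) (tau : 'I_m.+1 -> R) :
  R -> Prop :=
  fun x => exists lam : cpx, char_root A tau lam /\ x = Re lam.

(* Near the abscissa: pick a characteristic root lam with Re lam close to alpha0 and a
   unit null vector v of F(lam).  Moving right by d > 0 gives |F(lam + d) v| = O(d), so
   sigma_max(F(lam + d)^-1) >= 1 / |F(lam + d) v| blows up as d -> 0, while
   w >= 1 / w_0 because tau_0 = 0.
   Far to the right: on Re lam = s >= 0 every |e^(-lam tau_i)| <= 1, and
   lam x = F(lam) x + sum_i e^(-lam tau_i) A_i x gives (s - sum_i |A_i|) |x| <= |F(lam) x|;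
   hence sigma_max(F(lam)^-1) = O(1/s) uniformly in omega, while w stays bounded.
   All estimates use the entrywise l1 norm, which is submultiplicative and within a
   factor n of the Euclidean norm on columns. *)

From HB Require Import structures.
From Stdlib Require Import Reals Lra ClassicalEpsilon Classical.
From mathcomp Require Import all_boot all_order all_algebra.
Set Implicit Arguments. Unset Strict Implicit. Unset Printing Implicit Defensive.
Import GRing.Theory.
Local Open Scope R_scope.

HB.instance Definition _ := Monoid.isComLaw.Build R R0 Rplus
  (fun a b c => esym (Rplus_assoc a b c)) Rplus_comm Rplus_0_l.

Lemma Rsum_le (I : Type) (r : seq I) (P : pred I) (F G : I -> R) :
  (forall i, P i -> F i <= G i) ->
  \big[Rplus/R0]_(i <- r | P i) F i <= \big[Rplus/R0]_(i <- r | P i) G i.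
Proof. by move=> FG; elim/big_rec2: _ => [|i x y Pi]; [lra | have := FG i Pi; lra]. Qed.

Lemma Rsum_ge0 (I : Type) (r : seq I) (P : pred I) (F : I -> R) :
  (forall i, P i -> 0 <= F i) -> 0 <= \big[Rplus/R0]_(i <- r | P i) F i.
Proof. by move=> F0; elim/big_rec: _ => [|i x Pi]; [lra | have := F0 i Pi; lra]. Qed.

Lemma Rsum_ge_term (I : finType) (F : I -> R) (j : I) :
  (forall i, 0 <= F i) -> F j <= \big[Rplus/R0]_(i : I) F i.
Proof.
move=> F0; rewrite (bigD1 j) //=.
have := @Rsum_ge0 I (index_enum I) (fun i => i != j) F (fun i _ => F0 i); lra.
Qed.

Lemma Rsum_mulr (I : Type) (r : seq I) (P : pred I) (F : I -> R) c :
  c * \big[Rplus/R0]_(i <- r | P i) F i = \big[Rplus/R0]_(i <- r | P i) (c * F i).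
Proof. by elim/big_rec2: _ => [|i x y Pi <-]; ring. Qed.

Lemma Rsum_const (n : nat) c : \big[Rplus/R0]_(i < n) c = INR n * c.
Proof.
elim: n => [|n IH]; first by rewrite big_ord0 /=; ring.
by rewrite big_ord_recr /= IH; change (INR n * c + c = INR n.+1 * c); rewrite S_INR; ring.
Qed.

Lemma is_lub_approx (E : R -> Prop) l e : is_lub E l -> 0 < e -> exists x, E x /\ l - e < x.
Proof.
move=> [_ l_least] e_gt0; apply: NNPP => no_x.
suff : l <= l - e by lra.
apply: l_least => x Ex; apply: Rnot_lt_le => x_lt; apply: no_x; by exists x.
Qed.

Lemma Cmod_ge0 z : 0 <= Cmod z.
Proof. exact: sqrt_pos. Qed.

Lemma Cmod_sqr z : Cmod z * Cmod z = Re z * Re z + Im z * Im z.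
Proof. by rewrite /Cmod sqrt_sqrt //; nra. Qed.

Lemma Cmod0 : Cmod 0%R = 0.
Proof. by rewrite /Cmod /= Rmult_0_l Rplus_0_l sqrt_0. Qed.

Lemma Cmod_eq0 z : Cmod z = 0 -> z = 0%R.
Proof. by move=> z0; have := Cmod_sqr z; rewrite z0 => e; apply: cpx_ext => /=; nra. Qed.

Lemma Cmod_mul (a b : cpx) : Cmod (a * b)%R = Cmod a * Cmod b.
Proof. by rewrite /Cmod -sqrt_mult; try nra; congr sqrt; rewrite /GRing.mul /=; ring. Qed.

Lemma Cmod_opp (a : cpx) : Cmod (- a)%R = Cmod a.
Proof. by rewrite /Cmod; congr sqrt; rewrite /GRing.opp /=; ring. Qed.

Lemma Cmod_add (a b : cpx) : Cmod (a + b)%R <= Cmod a + Cmod b.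
Proof.
have [a0 b0] := (Cmod_ge0 a, Cmod_ge0 b).
apply: Rsqr_incr_0_var; last lra.
have cauchy_schwarz : Re a * Re b + Im a * Im b <= Cmod a * Cmod b.
  apply: Rsqr_incr_0_var; last nra.
  rewrite /Rsqr.
  have -> : Cmod a * Cmod b * (Cmod a * Cmod b) = (Cmod a * Cmod a) * (Cmod b * Cmod b) by ring.
  by rewrite !Cmod_sqr; have := Rle_0_sqr (Re a * Im b - Im a * Re b); rewrite /Rsqr; nra.
by rewrite /Rsqr Cmod_sqr; have := Cmod_sqr a; have := Cmod_sqr b; rewrite /= /cadd /=; nra.
Qed.

Lemma Cmod_sum (I : Type) (r : seq I) (P : pred I) (F : I -> cpx) :
  Cmod (\sum_(i <- r | P i) F i)%R <= \big[Rplus/R0]_(i <- r | P i) Cmod (F i).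
Proof.
elim/big_rec2: _ => [|i x y Pi xy]; first by rewrite Cmod0; lra.
by have := Cmod_add (F i) x; lra.
Qed.

Lemma Re_le_Cmod z : Re z <= Cmod z.
Proof. by have := Cmod_ge0 z; have := Cmod_sqr z; case: (Rle_lt_dec (Re z) 0); nra. Qed.

Lemma Cmod_RtoC x : Cmod (RtoC x) = Rabs x.
Proof. by rewrite /Cmod /= Rmult_0_l Rplus_0_r; apply: sqrt_Rsqr_abs. Qed.

Lemma Cmod_Cexp z : Cmod (Cexp z) = exp (Re z).
Proof.
rewrite /Cmod /=.
have -> : exp (Re z) * cos (Im z) * (exp (Re z) * cos (Im z)) +
    exp (Re z) * sin (Im z) * (exp (Re z) * sin (Im z)) =
    exp (Re z) * exp (Re z) * (Rsqr (sin (Im z)) + Rsqr (cos (Im z))) by rewrite /Rsqr; ring.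
by rewrite sin2_cos2 Rmult_1_r sqrt_square //; apply: Rlt_le (exp_pos _).
Qed.

Lemma exp_le x y : x <= y -> exp x <= exp y.
Proof. by case=> [xy | ->]; [left; apply: exp_increasing | right]. Qed.

Definition edelay (lam : cpx) (t : R) : cpx := Cexp (- (lam * RtoC t))%R.

Lemma Re_delay_exponent lam t : Re (- (lam * RtoC t))%R = - (Re lam * t).
Proof. by rewrite /GRing.opp /GRing.mul /=; ring. Qed.

Lemma Cmod_edelay lam t : Cmod (edelay lam t) = exp (- (Re lam * t)).
Proof. by rewrite /edelay Cmod_Cexp Re_delay_exponent. Qed.

Lemma Cmod_edelay_le1 lam t : 0 <= Re lam -> 0 <= t -> Cmod (edelay lam t) <= 1.
Proof. by move=> ? ?; rewrite Cmod_edelay -exp_0; apply: exp_le; nra. Qed.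

Lemma edelay_shift (lam : cpx) d t :
  edelay (lam + RtoC d)%R t = (RtoC (exp (- (d * t))) * edelay lam t)%R.
Proof.
have arg_shift : Re (- ((lam + RtoC d) * RtoC t))%R = - (d * t) + - (Re lam * t).
  by rewrite Re_delay_exponent /=; ring.
apply: cpx_ext; rewrite /edelay /Cexp arg_shift exp_plus Re_delay_exponent /=.
all: replace ((Re lam + d) * 0 + (Im lam + 0) * t) with (Re lam * 0 + Im lam * t) by ring; ring.
Qed.

Lemma Cmod_edelay_shift_sub (lam : cpx) d t : 0 <= d -> 0 <= t ->
  Cmod (edelay (lam + RtoC d)%R t - edelay lam t)%R <= exp (- (Re lam * t)) * (d * t).
Proof.
move=> d0 t0.
have -> : (edelay (lam + RtoC d) t - edelay lam t = RtoC (exp (- (d * t)) - 1) * edelay lam t)%R.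
  by rewrite edelay_shift; apply: cpx_ext; rewrite /GRing.add /GRing.opp /GRing.mul /=; ring.
rewrite Cmod_mul Cmod_RtoC Cmod_edelay Rmult_comm.
have exp_le1 : exp (- (d * t)) <= 1 by rewrite -exp_0; apply: exp_le; nra.
have := exp_ineq1_le (- (d * t)); have := exp_pos (- (Re lam * t)).
rewrite Rabs_left1; nra.
Qed.

Definition mxnorm1 p q (M : 'M[cpx]_(p, q)) : R :=
  \big[Rplus/R0]_(i < p) \big[Rplus/R0]_(j < q) Cmod (M i j).

Section EntrywiseNorm.
Variables p q : nat.
Implicit Types M N : 'M[cpx]_(p, q).

Lemma mxnorm1_ge0 M : 0 <= mxnorm1 M.
Proof. by apply: Rsum_ge0 => i _; apply: Rsum_ge0 => j _; apply: Cmod_ge0. Qed.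

Lemma row_norm1_le_mxnorm1 M i : \big[Rplus/R0]_(j < q) Cmod (M i j) <= mxnorm1 M.
Proof.
by apply: (Rsum_ge_term i) => k; apply: Rsum_ge0 => j _; apply: Cmod_ge0.
Qed.

Lemma mxnorm10 : mxnorm1 (0 : 'M[cpx]_(p, q))%R = 0.
Proof. by rewrite /mxnorm1 big1 // => i _; rewrite big1 // => j _; rewrite mxE Cmod0. Qed.

Lemma mxnorm1_add M N : mxnorm1 (M + N)%R <= mxnorm1 M + mxnorm1 N.
Proof.
rewrite /mxnorm1 -big_split; apply: Rsum_le => i _.
by rewrite -big_split; apply: Rsum_le => j _; rewrite mxE; apply: Cmod_add.
Qed.

Lemma mxnorm1_opp M : mxnorm1 (- M)%R = mxnorm1 M.
Proof. by apply: eq_bigr => i _; apply: eq_bigr => j _; rewrite mxE Cmod_opp. Qed.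

Lemma mxnorm1_sub M N : mxnorm1 (M - N)%R <= mxnorm1 M + mxnorm1 N.
Proof. by rewrite -(mxnorm1_opp N); apply: mxnorm1_add. Qed.

Lemma mxnorm1_scale c M : mxnorm1 (c *: M)%R = Cmod c * mxnorm1 M.
Proof.
rewrite /mxnorm1 Rsum_mulr; apply: eq_bigr => i _.
by rewrite Rsum_mulr; apply: eq_bigr => j _; rewrite mxE Cmod_mul.
Qed.

Lemma mxnorm1_sum (I : Type) (r : seq I) (P : pred I) (F : I -> 'M[cpx]_(p, q)) :
  mxnorm1 (\sum_(i <- r | P i) F i)%R <= \big[Rplus/R0]_(i <- r | P i) mxnorm1 (F i).
Proof.
elim/big_rec2: _ => [|i x y Pi xy]; first by rewrite mxnorm10; right.
by have := mxnorm1_add (F i) x; lra.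
Qed.

End EntrywiseNorm.

Lemma mxnorm1_mul p q r (M : 'M[cpx]_(p, q)) (N : 'M[cpx]_(q, r)) :
  mxnorm1 (M *m N)%R <= mxnorm1 M * mxnorm1 N.
Proof.
apply: Rle_trans
  (_ : _ <= \big[Rplus/R0]_(i < p) \big[Rplus/R0]_(k < q) (Cmod (M i k) * mxnorm1 N)) _.
  apply: Rsum_le => i _.
  apply: Rle_trans
    (_ : _ <= \big[Rplus/R0]_(j < r) \big[Rplus/R0]_(k < q) (Cmod (M i k) * Cmod (N k j))) _.
    apply: Rsum_le => j _; rewrite mxE; apply: Rle_trans (Cmod_sum _ _ _) _.
    by apply: Rsum_le => k _; rewrite Cmod_mul; right.
  rewrite exchange_big; apply: Rsum_le => k _; rewrite -Rsum_mulr.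
  by apply: Rmult_le_compat_l; [apply: Cmod_ge0 | apply: row_norm1_le_mxnorm1].
right; rewrite Rmult_comm Rsum_mulr; apply: eq_bigr => i _.
by rewrite Rsum_mulr; apply: eq_bigr => k _; ring.
Qed.

Section ColumnVectors.
Variable n : nat.
Implicit Types x : 'cV[cpx]_n.

Lemma mxnorm1_col x : mxnorm1 x = \big[Rplus/R0]_(i < n) Cmod (x i ord0).
Proof. by apply: eq_bigr => i _; rewrite big_ord1. Qed.

Lemma vnorm_ge0 x : 0 <= vnorm x.
Proof. exact: sqrt_pos. Qed.

Lemma Cmod_col_le_vnorm x i : Cmod (x i ord0) <= vnorm x.
Proof.
rewrite -(sqrt_square (Cmod (x i ord0))); last exact: Cmod_ge0.
apply: sqrt_le_1_alt; apply: (Rsum_ge_term (F := fun i => Cmod (x i ord0) * Cmod (x i ord0))).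
by move=> k; have := Cmod_ge0 (x k ord0); nra.
Qed.

Lemma vnorm_le_mxnorm1 x : vnorm x <= mxnorm1 x.
Proof.
rewrite mxnorm1_col -(sqrt_square (\big[Rplus/R0]_(i < n) Cmod (x i ord0))); last first.
  by apply: Rsum_ge0 => i _; apply: Cmod_ge0.
apply: sqrt_le_1_alt; rewrite Rsum_mulr; apply: Rsum_le => i _.
apply: Rmult_le_compat_r; first exact: Cmod_ge0.
by apply: Rsum_ge_term => k; apply: Cmod_ge0.
Qed.

Lemma mxnorm1_le_vnorm x : mxnorm1 x <= INR n * vnorm x.
Proof.
by rewrite mxnorm1_col -Rsum_const; apply: Rsum_le => i _; apply: Cmod_col_le_vnorm.
Qed.

Lemma vnorm0 : vnorm (0 : 'cV[cpx]_n)%R = 0.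
Proof.
rewrite /vnorm big1 ?sqrt_0 // => i _.
by rewrite mxE Cmod0 Rmult_0_l.
Qed.

Lemma vnorm_scale c x : vnorm (c *: x)%R = Cmod c * vnorm x.
Proof.
rewrite /vnorm -[Cmod c](sqrt_square _ (Cmod_ge0 c)) -sqrt_mult; first last.
- by apply: Rsum_ge0 => i _; have := Cmod_ge0 (x i ord0); nra.
- by have := Cmod_ge0 c; nra.
congr sqrt; rewrite Rsum_mulr; apply: eq_bigr => i _.
by rewrite mxE Cmod_mul; set a := Cmod (x i ord0); ring.
Qed.

Lemma vnorm_eq0 x : vnorm x = 0 -> x = 0%R.
Proof.
move=> x0; apply/matrixP => i j; have -> : j = ord0 by apply: val_inj; case: j => -[].
rewrite mxE; apply: Cmod_eq0.
by have := Cmod_col_le_vnorm x i; have := Cmod_ge0 (x i ord0); lra.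
Qed.

Lemma vnorm_gt0 x : x != 0%R -> 0 < vnorm x.
Proof. by case: (vnorm_ge0 x) => // /esym /vnorm_eq0 ->; rewrite eqxx. Qed.

Lemma vnorm_normalize x : x != 0%R -> vnorm (RtoC (/ vnorm x) *: x)%R = 1.
Proof.
move=> /vnorm_gt0 x_gt0.
rewrite vnorm_scale Cmod_RtoC Rabs_right; last by left; apply: Rinv_0_lt_compat.
by field; lra.
Qed.

Lemma exists_unit_vector : (0 < n)%N -> exists x, vnorm x = 1.
Proof.
move=> n_gt0; pose one : 'cV[cpx]_n := const_mx 1%R.
exists (RtoC (/ vnorm one) *: one)%R.
apply: vnorm_normalize; apply/eqP => /matrixP /(_ (Ordinal n_gt0) ord0).
by rewrite !mxE; apply/eqP/oner_neq0.
Qed.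

End ColumnVectors.

Section SpectralNorm.
Variable n : nat.
Hypothesis n_gt0 : (0 < n)%N.
Variable M : 'M[cpx]_n.

Lemma sigma_max_lub :
  is_lub (fun y => exists x : 'cV[cpx]_n, vnorm x = 1 /\ y = vnorm (M *m x)%R) (sigma_max M).
Proof.
apply: epsilon_spec; have [x x1] := exists_unit_vector n_gt0.
set E := fun y => exists x : 'cV[cpx]_n, vnorm x = 1 /\ y = vnorm (M *m x)%R.
have E_bounded : bound E.
  exists (mxnorm1 M * INR n) => _ [z [z1 ->]].
  apply: Rle_trans (vnorm_le_mxnorm1 _) _; apply: Rle_trans (mxnorm1_mul _ _) _.
  apply: Rmult_le_compat_l; first exact: mxnorm1_ge0.
  by have := mxnorm1_le_vnorm z; rewrite z1 Rmult_1_r.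
have [l l_lub] := completeness E E_bounded (ex_intro _ _ (ex_intro _ x (conj x1 erefl))).
by exists l.
Qed.

Lemma sigma_max_le c :
  (forall x, vnorm x = 1 -> vnorm (M *m x)%R <= c) -> sigma_max M <= c.
Proof. by move=> Mc; apply: (proj2 sigma_max_lub) => _ [x [x1 ->]]; apply: Mc. Qed.

Lemma sigma_max_ge0 : 0 <= sigma_max M.
Proof.
have [x x1] := exists_unit_vector n_gt0.
apply: Rle_trans (vnorm_ge0 (M *m x)%R) _.
by apply: (proj1 sigma_max_lub); exists x.
Qed.

Lemma vnorm_mul_le_sigma_max x : vnorm (M *m x)%R <= sigma_max M * vnorm x.
Proof.
have [->|x_neq0] := eqVneq x 0%R; first by rewrite mulmx0 vnorm0 Rmult_0_r; right.
have Mu_le : vnorm (M *m (RtoC (/ vnorm x) *: x))%R <= sigma_max M.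
  by apply: (proj1 sigma_max_lub); exists (RtoC (/ vnorm x) *: x)%R; rewrite vnorm_normalize.
have x_gt0 := vnorm_gt0 x_neq0.
rewrite -scalemxAr vnorm_scale Cmod_RtoC Rabs_right in Mu_le; last by left; apply: Rinv_0_lt_compat.
apply: (Rmult_le_reg_l (/ vnorm x)); first exact: Rinv_0_lt_compat.
by rewrite (Rmult_comm (sigma_max M)) -Rmult_assoc Rinv_l ?Rmult_1_l //; lra.
Qed.
End SpectralNorm.

Lemma det0_unit_kernel n (M : 'M[cpx]_n) :
  (\det M = 0)%R -> exists v : 'cV[cpx]_n, vnorm v = 1 /\ (M *m v = 0)%R.
Proof.
move=> detM0; have /det0P [r r_neq0 rM0] : (\det M^T == 0)%R by rewrite det_tr detM0.
have Mr0 : (M *m r^T = 0)%R by rewrite -[M]trmxK -trmx_mul rM0 trmx0.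
have rT_neq0 : (r^T != 0)%R by rewrite -(inj_eq (@trmx_inj _ _ _)) trmxK trmx0.
exists (RtoC (/ vnorm r^T) *: r^T)%R; split; first exact: vnorm_normalize.
by rewrite -scalemxAr Mr0 scaler0.
Qed.

Section DelaySystem.
Variables (n m : nat) (A : 'I_m.+1 -> 'M[cpx]_n) (tau : 'I_m.+1 -> R).
Hypothesis tau_ge0 : forall i, 0 <= tau i.

Lemma Fmat_mulmx p lam (x : 'M[cpx]_(n, p)) :
  (Fmat A tau lam *m x = lam *: x - \sum_(k < m.+1) edelay lam (tau k) *: (A k *m x))%R.
Proof.
rewrite /Fmat mulmxBl mul_scalar_mx mulmx_suml; congr (_ - _)%R.
by apply: eq_bigr => k _; rewrite -scalemxAl.
Qed.

Lemma Fmat_unitmx alpha0 lam :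
  is_lub (root_re A tau) alpha0 -> alpha0 < Re lam -> Fmat A tau lam \in unitmx.
Proof.
move=> [alpha0_ub _] alpha0_lt; rewrite unitmxE unitfE; apply/negP => /eqP detF0.
by have := alpha0_ub (Re lam) (ex_intro _ lam (conj detF0 erefl)); lra.
Qed.

Definition Anorm := \big[Rplus/R0]_(k < m.+1) mxnorm1 (A k).

Lemma Fmat_coercive p lam (x : 'M[cpx]_(n, p)) : 0 <= Re lam ->
  (Re lam - Anorm) * mxnorm1 x <= mxnorm1 (Fmat A tau lam *m x)%R.
Proof.
move=> Re_ge0.
have lamx : (lam *: x = Fmat A tau lam *m x + \sum_(k < m.+1) edelay lam (tau k) *: (A k *m x))%R.
  by rewrite Fmat_mulmx subrK.
have := mxnorm1_add (Fmat A tau lam *m x)%R (\sum_(k < m.+1) edelay lam (tau k) *: (A k *m x))%R.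
rewrite -lamx mxnorm1_scale.
have delayed_le : mxnorm1 (\sum_(k < m.+1) edelay lam (tau k) *: (A k *m x))%R <= Anorm * mxnorm1 x.
  apply: Rle_trans (mxnorm1_sum _ _ _) _; rewrite /Anorm Rmult_comm Rsum_mulr.
  apply: Rsum_le => k _; rewrite mxnorm1_scale -[mxnorm1 x * _]Rmult_1_l (Rmult_comm (mxnorm1 x)).
  apply: Rmult_le_compat; [exact: Cmod_ge0 | exact: mxnorm1_ge0 | |].
    exact: Cmod_edelay_le1.
  exact: mxnorm1_mul.
have := Re_le_Cmod lam; have := mxnorm1_ge0 x; nra.
Qed.

Hypothesis n_gt0 : (0 < n)%N.

Lemma sigma_max_invmx_Fmat_le lam : Fmat A tau lam \in unitmx ->
  0 <= Re lam -> Anorm < Re lam ->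
  sigma_max (invmx (Fmat A tau lam)) <= INR n / (Re lam - Anorm).
Proof.
move=> F_unit Re_ge0 Anorm_lt; apply: sigma_max_le => // y y1.
have gap_gt0 : 0 < Re lam - Anorm by lra.
have := Fmat_coercive (invmx (Fmat A tau lam) *m y)%R Re_ge0.
rewrite mulmxA mulmxV // mul1mx => coercive.
have := mxnorm1_le_vnorm y; rewrite y1 Rmult_1_r => y_le_n.
apply: Rle_trans (vnorm_le_mxnorm1 _) _.
apply: (Rmult_le_reg_l (Re lam - Anorm)) => //.
have -> : (Re lam - Anorm) * (INR n / (Re lam - Anorm)) = INR n by field; lra.
exact: Rle_trans coercive y_le_n.
Qed.

Definition root_gain a :=
  1 + \big[Rplus/R0]_(k < m.+1) (exp (- (a * tau k)) * tau k * mxnorm1 (A k)).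

Lemma root_gain_gt0 a : 0 < root_gain a.
Proof.
suff : 0 <= \big[Rplus/R0]_(k < m.+1) (exp (- (a * tau k)) * tau k * mxnorm1 (A k)).
  by rewrite /root_gain; lra.
apply: Rsum_ge0 => k _; apply: Rmult_le_pos; last exact: mxnorm1_ge0.
by apply: Rmult_le_pos; [apply: Rlt_le; apply: exp_pos | apply: tau_ge0].
Qed.

Lemma Fmat_mulmxB p lam mu (x : 'M[cpx]_(n, p)) :
  (Fmat A tau (lam + mu) *m x - Fmat A tau lam *m x = mu *: x -
    \sum_(k < m.+1) (edelay (lam + mu) (tau k) - edelay lam (tau k)) *: (A k *m x))%R.
Proof.
rewrite !Fmat_mulmx scalerDl [in RHS](eq_bigr _ (fun k _ => scalerBl _ _ _)) sumrB.
by rewrite !opprB [LHS]addrC -!addrA addKr addrCA.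
Qed.

Lemma Fmat_shift_root p lam d a (v : 'M[cpx]_(n, p)) :
  a <= Re lam -> 0 <= d -> (Fmat A tau lam *m v = 0)%R ->
  mxnorm1 (Fmat A tau (lam + RtoC d) *m v)%R <= d * root_gain a * mxnorm1 v.
Proof.
move=> a_le d_ge0 Fv0.
have := Fmat_mulmxB lam (RtoC d) v; rewrite Fv0 subr0 => ->.
apply: Rle_trans (mxnorm1_sub _ _) _.
rewrite mxnorm1_scale Cmod_RtoC Rabs_right; last lra.
set S := \big[Rplus/R0]_(k < m.+1) (exp (- (a * tau k)) * tau k * mxnorm1 (A k)).
suff : mxnorm1 (\sum_(k < m.+1)
    (edelay (lam + RtoC d) (tau k) - edelay lam (tau k)) *: (A k *m v))%R <= d * S * mxnorm1 v.
  by rewrite /root_gain -/S; lra.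
apply: Rle_trans (mxnorm1_sum _ _ _) _.
rewrite (Rmult_comm d) Rmult_assoc Rmult_comm Rsum_mulr; apply: Rsum_le => k _.
have tau_k := tau_ge0 k; rewrite mxnorm1_scale.
apply: Rle_trans (_ : _ <= exp (- (Re lam * tau k)) * (d * tau k) * (mxnorm1 (A k) * mxnorm1 v)) _.
  apply: Rmult_le_compat; [exact: Cmod_ge0 | exact: mxnorm1_ge0 | |].
    exact: Cmod_edelay_shift_sub.
  exact: mxnorm1_mul.
have -> : d * mxnorm1 v * (exp (- (a * tau k)) * tau k * mxnorm1 (A k)) =
    exp (- (a * tau k)) * (d * tau k) * (mxnorm1 (A k) * mxnorm1 v) by ring.
apply: Rmult_le_compat_r; first by apply: Rmult_le_pos; apply: mxnorm1_ge0.
by apply: Rmult_le_compat_r; [nra | apply: exp_le; nra].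
Qed.

Variable w : 'I_m.+1 -> R.
Hypothesis w_gt0 : forall i, 0 < w i.

Definition wsum := \big[Rplus/R0]_(i < m.+1) / w i.

Lemma wfun_ge0 lam : 0 <= wfun tau w lam.
Proof.
apply: Rsum_ge0 => k _; apply: Rmult_le_pos; first exact: Cmod_ge0.
by apply: Rlt_le; apply: Rinv_0_lt_compat.
Qed.

Lemma inv_w0_le_wfun lam : tau ord0 = 0 -> / w ord0 <= wfun tau w lam.
Proof.
move=> tau0; apply: Rle_trans (Rsum_ge_term (F := fun k => Cmod (edelay lam (tau k)) / w k) ord0 _).
  by rewrite Cmod_edelay tau0 Rmult_0_r Ropp_0 exp_0 /Rdiv Rmult_1_l; right.
move=> k; apply: Rmult_le_pos; first exact: Cmod_ge0.
by apply: Rlt_le; apply: Rinv_0_lt_compat.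
Qed.

Lemma wfun_le_wsum lam : 0 <= Re lam -> wfun tau w lam <= wsum.
Proof.
move=> Re_ge0; apply: Rsum_le => k _; rewrite -[/ w k]Rmult_1_l.
apply: Rmult_le_compat_r; first by apply: Rlt_le; apply: Rinv_0_lt_compat.
exact: Cmod_edelay_le1.
Qed.

Lemma ffun_ge0 lam : 0 <= ffun A tau w lam.
Proof. by apply: Rmult_le_pos; [apply: wfun_ge0 | apply: sigma_max_ge0]. Qed.

Lemma ffun_le lam : Fmat A tau lam \in unitmx -> 0 <= Re lam -> Anorm < Re lam ->
  ffun A tau w lam <= wsum * (INR n / (Re lam - Anorm)).
Proof.
move=> F_unit Re_ge0 Anorm_lt; apply: Rmult_le_compat.
- exact: wfun_ge0.
- exact: sigma_max_ge0.
- exact: wfun_le_wsum.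
- exact: sigma_max_invmx_Fmat_le.
Qed.

Lemma ffun_near_root_ge lam d a : tau ord0 = 0 -> char_root A tau lam ->
  a <= Re lam -> 0 < d -> Fmat A tau (lam + RtoC d)%R \in unitmx ->
  / (w ord0 * INR n * root_gain a * d) <= ffun A tau w (lam + RtoC d)%R.
Proof.
move=> tau0 root_lam a_le d_gt0 F_unit.
have [v [v1 Fv0]] := det0_unit_kernel root_lam.
set F := Fmat A tau (lam + RtoC d)%R in F_unit *.
set P := INR n * root_gain a * d.
have P_gt0 : 0 < P.
  apply: Rmult_lt_0_compat => //; apply: Rmult_lt_0_compat; last exact: root_gain_gt0.
  by apply: lt_0_INR; apply/ltP.
have Fv_le : vnorm (F *m v)%R <= P.
  apply: Rle_trans (vnorm_le_mxnorm1 _) _.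
  apply: Rle_trans (Fmat_shift_root a_le (Rlt_le _ _ d_gt0) Fv0) _.
  have := mxnorm1_le_vnorm v; rewrite v1 Rmult_1_r /P => v_le_n.
  have -> : d * root_gain a * mxnorm1 v = mxnorm1 v * root_gain a * d by ring.
  apply: Rmult_le_compat_r; first lra.
  by apply: Rmult_le_compat_r => //; apply: Rlt_le; apply: root_gain_gt0.
have one_le : 1 <= sigma_max (invmx F) * P.
  have := vnorm_mul_le_sigma_max n_gt0 (invmx F) (F *m v)%R.
  rewrite mulKmx // v1 => one_le.
  apply: Rle_trans one_le _; apply: Rmult_le_compat_l => //; exact: sigma_max_ge0.
have inv_P_le : / P <= sigma_max (invmx F).
  by apply: (Rmult_le_reg_r P) => //; rewrite Rinv_l; lra.
have -> : w ord0 * INR n * root_gain a * d = w ord0 * P by rewrite /P; ring.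
rewrite Rinv_mult; apply: Rmult_le_compat => //.
- by apply: Rlt_le; apply: Rinv_0_lt_compat.
- by apply: Rlt_le; apply: Rinv_0_lt_compat.
- exact: inv_w0_le_wfun.
Qed.

End DelaySystem.

Section Abscissa.
Variables (n m : nat) (A : 'I_m.+1 -> 'M[cpx]_n) (tau w : 'I_m.+1 -> R) (alpha0 : R).
Hypotheses (n_gt0 : (0 < n)%N) (tau0 : tau ord0 = 0) (tau_ge0 : forall i, 0 <= tau i).
Hypotheses (w_gt0 : forall i, 0 < w i) (alpha0_lub : is_lub (root_re A tau) alpha0).

Let C := w ord0 * INR n * root_gain A tau (alpha0 - 1).

Let C_gt0 : 0 < C.
Proof.
apply: Rmult_lt_0_compat; last exact: root_gain_gt0.
by apply: Rmult_lt_0_compat => //; apply: lt_0_INR; apply/ltP.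
Qed.

Lemma ffun_near_abscissa_ge del s : 0 < del <= 1 -> alpha0 < s < alpha0 + del ->
  exists om, / (C * (2 * del)) <= ffun A tau w (sjw s om).
Proof.
move=> [del_gt0 del_le1] [alpha0_lt s_lt].
have [_ [[lam [root_lam ->]] Re_gt]] := is_lub_approx alpha0_lub del_gt0.
have Re_le : Re lam <= alpha0 by apply: (proj1 alpha0_lub); exists lam.
set d := s - Re lam; have d_gt0 : 0 < d by rewrite /d; lra.
exists (Im lam).
have -> : sjw s (Im lam) = (lam + RtoC d)%R by apply: cpx_ext => /=; rewrite /d; ring.
have F_unit : Fmat A tau (lam + RtoC d)%R \in unitmx.
  by apply: Fmat_unitmx alpha0_lub _; change (alpha0 < Re lam + d); rewrite /d; lra.
have Re_ge : alpha0 - 1 <= Re lam by lra.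
apply: Rle_trans (ffun_near_root_ge tau_ge0 n_gt0 w_gt0 tau0 root_lam Re_ge d_gt0 F_unit).
rewrite -/C; apply: Rinv_le_contravar; first exact: Rmult_lt_0_compat.
by apply: Rmult_le_compat_l; [apply: Rlt_le | rewrite /d; lra].
Qed.

Lemma sup_ffun_unbounded_near_abscissa (M : R) : exists delta : R, 0 < delta /\
  forall s : R, alpha0 < s < alpha0 + delta -> exists y, fvals A tau w s y /\ M < y.
Proof.
have M1_gt0 : 0 < Rabs M + 1 by have := Rabs_pos M; lra.
set del := Rmin 1 (/ (2 * C * (Rabs M + 1))).
have del_gt0 : 0 < del by apply: Rmin_pos; [lra | apply: Rinv_0_lt_compat; have := C_gt0; nra].
have del_le1 : del <= 1 by apply: Rmin_l.
have Cdel_le : C * (2 * del) <= / (Rabs M + 1).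
  have -> : / (Rabs M + 1) = C * (2 * / (2 * C * (Rabs M + 1))) by field; lra.
  apply: Rmult_le_compat_l; first exact: Rlt_le C_gt0.
  have : del <= / (2 * C * (Rabs M + 1)) by apply: Rmin_r.
  lra.
exists del; split => // s s_near.
have [om f_ge] := ffun_near_abscissa_ge (conj del_gt0 del_le1) s_near.
exists (ffun A tau w (sjw s om)); split; first by exists om.
apply: Rle_lt_trans (Rle_abs M) (Rlt_le_trans _ (Rabs M + 1) _ _ _); first lra.
apply: Rle_trans f_ge; rewrite -[X in X <= _]Rinv_inv.
by apply: Rinv_le_contravar => //; apply: Rmult_lt_0_compat; [apply: C_gt0 | lra].
Qed.

Lemma fvals_lub_le s B : (forall om, ffun A tau w (sjw s om) <= B) ->
  exists u, is_lub (fvals A tau w s) u /\ 0 <= u <= B.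
Proof.
move=> f_le; have fvals_bounded : bound (fvals A tau w s) by exists B => _ [om ->].
have [u u_lub] := completeness _ fvals_bounded (ex_intro _ _ (ex_intro _ 0 erefl)).
exists u; split => //; split; last by apply: (proj2 u_lub) => _ [om ->].
by apply: Rle_trans (ffun_ge0 A tau n_gt0 w_gt0 (sjw s 0)) _; apply: (proj1 u_lub); exists 0.
Qed.

Lemma sup_ffun_vanishes_at_infinity eps : 0 < eps -> exists S : R,
  forall s : R, S < s -> exists u : R, is_lub (fvals A tau w s) u /\ Rabs u < eps.
Proof.
move=> eps_gt0; set K := Anorm A; set W := wsum w.
have W_ge0 : 0 <= W by apply: Rsum_ge0 => i _; apply: Rlt_le; apply: Rinv_0_lt_compat.
set S0 := W * INR n / eps.
have S0_ge0 : 0 <= S0.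
  apply: Rmult_le_pos; first by apply: Rmult_le_pos => //; apply: pos_INR.
  by apply: Rlt_le; apply: Rinv_0_lt_compat.
exists (Rmax (Rmax alpha0 0) (K + S0)) => s s_gt.
have alpha0_lt : alpha0 < s by have := Rmax_l alpha0 0; have := Rmax_l (Rmax alpha0 0) (K + S0); lra.
have s_gt0 : 0 < s by have := Rmax_r alpha0 0; have := Rmax_l (Rmax alpha0 0) (K + S0); lra.
have gap : S0 < s - K by have := Rmax_r (Rmax alpha0 0) (K + S0); lra.
have f_le om : ffun A tau w (sjw s om) <= W * (INR n / (s - K)).
  by apply: ffun_le => //=; [exact: Fmat_unitmx alpha0_lub _ | lra | rewrite -/K; lra].
have [u [u_lub [u_ge0 u_le]]] := fvals_lub_le f_le.
exists u; split => //; rewrite Rabs_right; last lra.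
apply: Rle_lt_trans u_le _; apply: (Rmult_lt_reg_r (s - K)); first lra.
have -> : W * (INR n / (s - K)) * (s - K) = S0 * eps by rewrite /S0; field; lra.
by rewrite (Rmult_comm eps); apply: Rmult_lt_compat_r.
Qed.

End Abscissa.

Theorem proposition2 (n m : nat) (A : 'I_m.+1 -> 'M[cpx]_n) (tau w : 'I_m.+1 -> R)
    (alpha0 : R) :
  (0 < n)%N ->
  tau ord0 = 0 ->
  (forall i, 0 <= tau i) ->
  (forall i, 0 < w i) ->
  is_lub (root_re A tau) alpha0 ->
  (forall M : R, exists delta : R, 0 < delta /\
     forall s : R, alpha0 < s < alpha0 + delta ->
       exists y, fvals A tau w s y /\ M < y)
  /\
  (forall eps : R, 0 < eps -> exists S : R,
     forall s : R, S < s ->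
       exists u : R, is_lub (fvals A tau w s) u /\ Rabs u < eps).
Proof.
move=> n_gt0 tau0 tau_ge0 w_gt0 alpha0_lub; split.
- exact: sup_ffun_unbounded_near_abscissa n_gt0 tau0 tau_ge0 w_gt0 alpha0_lub.
- exact: sup_ffun_vanishes_at_infinity n_gt0 tau_ge0 w_gt0 alpha0_lub.
Qed.
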